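(* Let $S$ be an inverse semigroup that is a separately Scott-continuous mirror semigroup, with semilattice of idempotents $\Sigma$. Then the way-below relation $\ll$ on $S$ is multiplicative if and only if the way-below relation $\prec\!\!\!\prec$ on $\Sigma$ is multiplicative.
   Context: An inverse semigroup is a semigroup $S$ in which every $s$ has a unique $s^*$ with $ss^*s=s$ and $s^*ss^*=s^*$. $\Sigma=\Sigma(S)$ is the set of idempotents (a subsemigroup). The intrinsic order is $s\leqslant t$ iff $s=t\epsilon$ for some idempotent $\epsilon$. A subset is directed if nonempty and any two elements have an upper bound in it. $S$ is a mirror semigroup if every directed subset of $\Sigma$ having a supremum in $(\Sigma,\leqslant)$ also has a supremum in $(S,\leqslant)$. $S$ is separately Scott-continuous if for every directed $D\subseteq S$ with a supremum $\bigvee D$ in $S$ and every $s\in S$, $\bigvee(Ds)$ exists in $S$ and equals $(\bigvee D)s$. In a poset, $x$ is way-below $y$ if for every directed subset $D$ that has a supremum with $y\leqslant \sup D$, there is $d\in D$ with $x\leqslant d$. $\ll$ denotes the way-below relation of $(S,\leqslant)$ and $\prec\!\!\!\prec$ that of $(\Sigma,\leqslant)$. A way-below relation $R$ on a semigroup is multiplicative if $s\,R\,t$ and $s'\,R\,t'$ imply $ss'\,R\,tt'$. *)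

Set Implicit Arguments.

Section InvSemigroup.
Variable S : Type.
Variable mul : S -> S -> S.

Definition is_inverse_semigroup : Prop :=
  (forall a b c, mul a (mul b c) = mul (mul a b) c) /\
  (forall s, exists! t, mul (mul s t) s = s /\ mul (mul t s) t = t).

Definition idempotent (e : S) : Prop := mul e e = e.

Definition ileq (s t : S) : Prop := exists e, idempotent e /\ s = mul t e.

Definition directed (D : S -> Prop) : Prop :=
  (exists x, D x) /\
  (forall x y, D x -> D y -> exists z, D z /\ ileq x z /\ ileq y z).

Definition is_sup_in (P D : S -> Prop) (x : S) : Prop :=
  P x /\ (forall d, D d -> ileq d x) /\
  (forall y, P y -> (forall d, D d -> ileq d y) -> ileq x y).

Definition way_below_in (P : S -> Prop) (x y : S) : Prop :=
  forall D : S -> Prop, (forall d, D d -> P d) -> directed D ->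
  forall s, is_sup_in P D s -> ileq y s -> exists d, D d /\ ileq x d.

Definition allS : S -> Prop := fun _ => True.

Definition way_below (x y : S) : Prop := way_below_in allS x y.
Definition way_below_idem (x y : S) : Prop := way_below_in idempotent x y.

Definition multiplicative_on (P : S -> Prop) (R : S -> S -> Prop) : Prop :=
  forall s t s' t', P s -> P t -> P s' -> P t' ->
  R s t -> R s' t' -> R (mul s s') (mul t t').

Definition mirror_semigroup : Prop :=
  forall D : S -> Prop, (forall d, D d -> idempotent d) -> directed D ->
  (exists x, is_sup_in idempotent D x) -> exists y, is_sup_in allS D y.

Definition separately_scott_continuous : Prop :=
  forall D : S -> Prop, directed D -> forall x, is_sup_in allS D x ->
  forall s, is_sup_in allS (fun y => exists d, D d /\ y = mul d s) (mul x s).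

End InvSemigroup.

(* In an inverse semigroup s <= t forces s = (s s^* ) t, so whatever lies below t is
   governed by an idempotent below t t^* .  Feeding separate Scott-continuity the directed
   sets D t^* and D t shows that s << t iff s <= t and s s^* << t t^* .  On idempotents,
   continuity shows that way-below in Sigma implies way-below in S, and the mirror property
   (suprema in Sigma are suprema in S) gives the converse, so the two relations agree on
   Sigma; this settles one direction.  For the other, the range idempotent of a product is
   that of an element times an idempotent, (s s')(s s')^* = (s r)(s r)^* with r = s' s'^* ,
   and (e a)(e a)^* = e (a a^* ) for e idempotent; applying the characterisation of << twice
   reduces s s' << t t' to the multiplicativity of << on idempotents. *)

From Stdlib Require Import ClassicalEpsilon.

Set Implicit Arguments.

Section InverseSemigroup.

Variables (S : Type) (mul : S -> S -> S).
Hypothesis HS : is_inverse_semigroup mul.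

Local Infix "*" := mul.
Local Notation idem := (idempotent mul).
Local Notation "s ≤ t" := (ileq mul s t) (at level 70).
Local Notation "s ≪ t" := (way_below mul s t) (at level 70).

Definition inv (s : S) : S :=
  proj1_sig (constructive_indefinite_description _
    (proj1 (proj2 (unique_existence _) (proj2 HS s)))).

Local Notation "s ^*" := (inv s) (at level 8, left associativity, format "s ^*").
Local Notation rng s := (s * s^*).
Local Notation mulr_set D c := (fun z => exists d, D d /\ z = d * c).
Local Notation inv_set D := (fun z => exists d, D d /\ z = d^*).

Lemma mulA a b c : a * (b * c) = a * b * c.
Proof. exact (proj1 HS a b c). Qed.

Lemma inv_spec s : s * s^* * s = s /\ s^* * s * s^* = s^*.
Proof.
  unfold inv. destruct (constructive_indefinite_description _ _) as [t Ht]. exact Ht.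
Qed.

Lemma mul_inv_mul s : s * s^* * s = s.
Proof. apply inv_spec. Qed.

Lemma inv_mul_inv s : s^* * s * s^* = s^*.
Proof. apply inv_spec. Qed.

Lemma inv_unique s t : s * t * s = s -> t * s * t = t -> t = s^*.
Proof.
  intros Hsts Htst. destruct (proj2 HS s) as [u [_ Hu]].
  transitivity u; [symmetry | ]; apply Hu; auto using inv_spec.
Qed.

Lemma mul_inv_mulr x s : x * s * s^* * s = x * s.
Proof. now rewrite <- !mulA, (mulA s), mul_inv_mul. Qed.

Lemma inv_mul_invr x s : x * s^* * s * s^* = x * s^*.
Proof. now rewrite <- !mulA, (mulA s^*), inv_mul_inv. Qed.

Lemma mulr_idem x f : idem f -> x * f * f = x * f.
Proof. unfold idempotent. intros Hf. now rewrite <- mulA, Hf. Qed.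

Lemma idem_inv e : idem e -> e^* = e.
Proof. unfold idempotent. intros He. symmetry. apply inv_unique; now rewrite !He. Qed.

Lemma invK s : s^*^* = s.
Proof. symmetry. apply inv_unique; [apply inv_mul_inv | apply mul_inv_mul]. Qed.

Lemma idem_mul_inv s : idem (rng s).
Proof. unfold idempotent. now rewrite !mulA, mul_inv_mul. Qed.

Lemma idem_inv_mul s : idem (s^* * s).
Proof. unfold idempotent. now rewrite !mulA, inv_mul_inv. Qed.

(* x := (e f)^* satisfies x = f x e, which makes x idempotent, hence so is e f = x^*. *)
Lemma idem_mul e f : idem e -> idem f -> idem (e * f).
Proof.
  intros He Hf.
  destruct (inv_spec (e * f)) as [Hefe Hxefx].
  set (x := (e * f)^*) in *.
  rewrite mulA in Hefe. rewrite !mulA in Hxefx.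
  assert (Hfxe_spec : f * x * e * f * x * e = f * x * e).
  { transitivity (f * (x * e * f * x) * e); [now rewrite !mulA | now rewrite Hxefx]. }
  assert (Hx : f * x * e = x).
  { apply inv_unique; rewrite !mulA, (mulr_idem _ Hf), (mulr_idem _ He); assumption. }
  assert (Hxx : idem x).
  { unfold idempotent. transitivity (f * x * e * (f * x * e)); [now rewrite Hx |].
    now rewrite !mulA, Hfxe_spec. }
  assert (Hef : e * f = x) by (rewrite <- (idem_inv Hxx); unfold x; now rewrite invK).
  now rewrite Hef.
Qed.

(* f e is an inverse of the idempotent e f, which is its own unique inverse. *)
Lemma idem_comm e f : idem e -> idem f -> e * f = f * e.
Proof.
  intros He Hf.
  pose proof (idem_mul He Hf) as Hef. pose proof (idem_mul Hf He) as Hfe.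
  rewrite <- (idem_inv Hef). symmetry. apply inv_unique.
  - rewrite !mulA, (mulr_idem _ Hf), (mulr_idem _ He). unfold idempotent in Hef.
    now rewrite mulA in Hef.
  - rewrite !mulA, (mulr_idem _ He), (mulr_idem _ Hf). unfold idempotent in Hfe.
    now rewrite mulA in Hfe.
Qed.

Lemma inv_mul s t : (s * t)^* = t^* * s^*.
Proof.
  symmetry. apply inv_unique.
  - transitivity (s * (rng t * (s^* * s)) * t); [now rewrite !mulA |].
    rewrite (idem_comm (idem_mul_inv t) (idem_inv_mul s)).
    now rewrite !mulA, mul_inv_mul, mul_inv_mulr.
  - transitivity (t^* * ((s^* * s) * rng t) * s^*); [now rewrite !mulA |].
    rewrite (idem_comm (idem_inv_mul s) (idem_mul_inv t)).
    now rewrite !mulA, inv_mul_inv, inv_mul_invr.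
Qed.

Lemma idem_conj e c : idem e -> idem (c^* * e * c).
Proof.
  intros He. unfold idempotent.
  transitivity (c^* * (e * rng c) * (e * c)); [now rewrite !mulA |].
  rewrite (idem_comm He (idem_mul_inv c)).
  transitivity (c^* * c * c^* * (e * e) * c); [now rewrite !mulA |].
  unfold idempotent in He. now rewrite inv_mul_inv, He.
Qed.

Lemma rng_mul_idem e a : idem e -> rng (e * a) = e * rng a.
Proof.
  intros He. rewrite inv_mul, (idem_inv He).
  transitivity (e * rng a * e); [now rewrite !mulA |].
  rewrite <- mulA, (idem_comm (idem_mul_inv a) He), mulA.
  unfold idempotent in He. now rewrite He.
Qed.

Lemma rng_mul s s' : rng (s * s') = rng (s * rng s').
Proof.
  rewrite (inv_mul s (rng s')), (idem_inv (idem_mul_inv s')), inv_mul.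
  transitivity (s * (rng s' * rng s') * s^*); [| now rewrite !mulA].
  now rewrite (idem_mul_inv s'), !mulA.
Qed.

Lemma le_refl s : s ≤ s.
Proof. exists (s^* * s). split; [apply idem_inv_mul |]. now rewrite mulA, mul_inv_mul. Qed.

Lemma le_trans a b c : a ≤ b -> b ≤ c -> a ≤ c.
Proof.
  intros [e [He ->]] [f [Hf ->]]. exists (f * e).
  split; [now apply idem_mul | now rewrite mulA].
Qed.

Lemma le_idem a b : a ≤ b -> idem b -> idem a.
Proof. intros [e [He ->]] Hb. now apply idem_mul. Qed.

Lemma mul_idem_le d e : idem e -> d * e ≤ d.
Proof. intros He. now exists e. Qed.

Lemma le_mull a b c : a ≤ b -> c * a ≤ c * b.
Proof. intros [e [He ->]]. exists e. split; [assumption | now rewrite mulA]. Qed.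

Lemma le_mulr a b c : a ≤ b -> a * c ≤ b * c.
Proof.
  intros [e [He ->]]. exists (c^* * e * c). split; [now apply idem_conj |].
  transitivity (b * (rng c * e) * c); [| now rewrite !mulA].
  now rewrite (idem_comm (idem_mul_inv c) He), !mulA, mul_inv_mulr.
Qed.

Lemma le_inv a b : a ≤ b -> a^* ≤ b^*.
Proof.
  intros [e [He ->]]. rewrite inv_mul, (idem_inv He).
  exists (b * e * b^*). split.
  - pose proof (idem_conj b^* He) as Hconj. now rewrite invK in Hconj.
  - transitivity (b^* * b * e * b^*); [| now rewrite !mulA].
    now rewrite (idem_comm (idem_inv_mul b) He), !mulA, inv_mul_invr.
Qed.

Lemma le_rng a b : a ≤ b -> rng a ≤ rng b.
Proof.
  intros [e [He ->]]. rewrite inv_mul, (idem_inv He).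
  exists (b * e * b^*). split.
  - pose proof (idem_conj b^* He) as Hconj. now rewrite invK in Hconj.
  - now rewrite !mulA, mul_inv_mul, (mulr_idem _ He).
Qed.

Lemma le_eq_mul_inv_mul s t : s ≤ t -> s = t * (s^* * s).
Proof.
  intros [e [He ->]]. rewrite inv_mul, (idem_inv He).
  transitivity (t * (e * (t^* * t)) * e); [| now rewrite !mulA].
  now rewrite (idem_comm He (idem_inv_mul t)), !mulA, mul_inv_mul, (mulr_idem _ He).
Qed.

Lemma le_eq_rng_mul s t : s ≤ t -> s = rng s * t.
Proof.
  intros [e [He ->]]. rewrite inv_mul, (idem_inv He), !mulA, (mulr_idem _ He).
  transitivity (t * (e * (t^* * t))); [| now rewrite !mulA].
  now rewrite (idem_comm He (idem_inv_mul t)), !mulA, mul_inv_mul.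
Qed.

Lemma idem_le_mull a b : a ≤ b -> idem a -> b * a = a.
Proof.
  intros Hab Ha. pose proof (le_eq_mul_inv_mul Hab) as Ha_eq.
  rewrite (idem_inv Ha) in Ha_eq. unfold idempotent in Ha. now rewrite Ha in Ha_eq.
Qed.

Lemma directed_mulr D c : directed mul D -> directed mul (mulr_set D c).
Proof.
  intros [[x Hx] HD]. split; [now exists (x * c), x |].
  intros ? ? [d1 [Hd1 ->]] [d2 [Hd2 ->]].
  destruct (HD d1 d2 Hd1 Hd2) as [z [Hz [Hd1z Hd2z]]].
  exists (z * c). split; [eauto | split; now apply le_mulr].
Qed.

Lemma directed_inv D : directed mul D -> directed mul (inv_set D).
Proof.
  intros [[x Hx] HD]. split; [now exists x^*, x |].
  intros ? ? [d1 [Hd1 ->]] [d2 [Hd2 ->]].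
  destruct (HD d1 d2 Hd1 Hd2) as [z [Hz [Hd1z Hd2z]]].
  exists z^*. split; [eauto | split; now apply le_inv].
Qed.

Lemma is_sup_inv D y :
  is_sup_in mul (allS (S:=S)) D y -> is_sup_in mul (allS (S:=S)) (inv_set D) y^*.
Proof.
  intros [_ [Hub Hleast]]. split; [exact I | split].
  - intros ? [d [Hd ->]]. now apply le_inv, Hub.
  - intros z _ Hz. rewrite <- (invK z). apply le_inv, Hleast; [exact I |].
    intros d Hd. rewrite <- (invK d). apply le_inv, Hz. now exists d.
Qed.

Lemma way_below_inv s t : s ≪ t -> s^* ≪ t^*.
Proof.
  intros Hst D _ HD y Hy Hty.
  assert (Hty' : t ≤ y^*) by (rewrite <- (invK t); now apply le_inv).
  destruct (Hst _ (fun _ _ => I) (directed_inv HD) _ (is_sup_inv Hy) Hty')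
    as [? [[d [Hd ->]] Hsd]].
  exists d. split; [assumption |]. rewrite <- (invK d). now apply le_inv.
Qed.

Lemma way_below_le s t : s ≪ t -> s ≤ t.
Proof.
  intros Hst.
  assert (Hsingle : directed mul (fun z => z = t)).
  { split; [now exists t |]. intros ? ? -> ->. exists t. auto using le_refl. }
  assert (Hsup : is_sup_in mul (allS (S:=S)) (fun z => z = t) t).
  { split; [exact I | split; [intros ? ->; apply le_refl | intros y _ Hy; now apply Hy]]. }
  destruct (Hst _ (fun _ _ => I) Hsingle t Hsup (le_refl t)) as [? [-> Hs]].
  exact Hs.
Qed.

Section Continuity.

Hypothesis Hsc : separately_scott_continuous mul.

Lemma way_below_rng s t : s ≪ t -> rng s ≪ rng t.
Proof.
  intros Hst D _ HD y Hy Hty.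
  assert (Ht_yt : t ≤ y * t) by (rewrite <- (mul_inv_mul t) at 1; now apply le_mulr).
  destruct (Hst _ (fun _ _ => I) (directed_mulr t HD) _ (Hsc HD Hy t) Ht_yt)
    as [? [[d [Hd ->]] Hs_dt]].
  exists d. split; [assumption |].
  destruct Hy as [_ [Hub _]].
  set (g := d * rng t).
  assert (Hg : g ≤ rng t).
  { pose proof (le_mulr (rng t) (Hub d Hd)) as Hdy.
    now rewrite (idem_le_mull Hty (idem_mul_inv t)) in Hdy. }
  assert (Hgi : idem g) by exact (le_idem Hg (idem_mul_inv t)).
  assert (Hs_gt : s ≤ g * t) by (unfold g; now rewrite <- mulA, mul_inv_mul).
  apply le_trans with (rng (g * t)); [now apply le_rng |].
  rewrite inv_mul, (idem_inv Hgi).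
  replace (g * t * (t^* * g)) with (g * (rng t * g)) by now rewrite !mulA.
  rewrite (idem_le_mull Hg Hgi), Hgi. now apply mul_idem_le, idem_mul_inv.
Qed.

Lemma way_below_of_rng s t : s ≤ t -> rng s ≪ rng t -> s ≪ t.
Proof.
  intros Hst Hrng D _ HD y Hy Hty.
  destruct (Hrng _ (fun _ _ => I) (directed_mulr t^* HD) _ (Hsc HD Hy t^*)
    (le_mulr t^* Hty)) as [? [[d [Hd ->]] Hsd]].
  exists d. split; [assumption |].
  rewrite (le_eq_rng_mul Hst). apply le_trans with (d * t^* * t); [now apply le_mulr |].
  rewrite <- mulA. apply mul_idem_le, idem_inv_mul.
Qed.

Lemma way_below_of_way_below_idem e f :
  idem f -> way_below_idem mul e f -> e ≪ f.
Proof.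
  intros Hf Hef D _ HD y Hy Hfy.
  pose proof (Hsc HD Hy f) as Hsup_f. rewrite (idem_le_mull Hfy Hf) in Hsup_f.
  destruct Hy as [_ [Hub _]].
  assert (HDf : forall z, mulr_set D f z -> idem z).
  { intros ? [d [Hd ->]]. apply le_idem with f; [| assumption].
    pose proof (le_mulr f (Hub d Hd)) as Hdf. now rewrite (idem_le_mull Hfy Hf) in Hdf. }
  assert (Hsup : is_sup_in mul idem (mulr_set D f) f).
  { destruct Hsup_f as [_ [Hub_f Hleast_f]].
    split; [exact Hf | split; [exact Hub_f | intros z _; apply Hleast_f; exact I]]. }
  destruct (Hef _ HDf (directed_mulr f HD) f Hsup (le_refl f)) as [? [[d [Hd ->]] Hed]].
  exists d. split; [assumption |]. apply le_trans with (d * f); [assumption |].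
  now apply mul_idem_le.
Qed.

End Continuity.

Lemma way_below_idem_of_way_below e f :
  mirror_semigroup mul -> e ≪ f -> way_below_idem mul e f.
Proof.
  intros Hmir Hef D HDi HD x Hx Hfx.
  destruct (Hmir D HDi HD (ex_intro _ x Hx)) as [y Hy].
  destruct Hx as [Hxi [Hxub Hxleast]].
  pose proof Hy as [_ [Hyub Hyleast]].
  assert (Hyx : y ≤ x) by (apply Hyleast; [exact I | exact Hxub]).
  assert (Hxy : x ≤ y) by (apply Hxleast; [exact (le_idem Hyx Hxi) | exact Hyub]).
  exact (Hef D (fun _ _ => I) HD y Hy (le_trans Hfx Hxy)).
Qed.

Section Multiplicativity.

Hypotheses (Hsc : separately_scott_continuous mul) (Hmir : mirror_semigroup mul).
Hypothesis Hmul_idem : multiplicative_on mul idem (way_below_idem mul).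

Lemma way_below_mul_idem e f e' f' : idem e -> idem f -> idem e' -> idem f' ->
  e ≪ f -> e' ≪ f' -> e * e' ≪ f * f'.
Proof.
  intros He Hf He' Hf' Hef Hef'.
  apply way_below_of_way_below_idem; [assumption | now apply idem_mul |].
  apply Hmul_idem; auto; now apply way_below_idem_of_way_below.
Qed.

Lemma way_below_idem_mull a b e f : idem e -> idem f ->
  a ≪ b -> e ≪ f -> e * a ≪ f * b.
Proof.
  intros He Hf Hab Hef.
  apply way_below_of_rng; [assumption | |].
  - apply le_trans with (e * b); [apply le_mull | apply le_mulr]; now apply way_below_le.
  - rewrite (rng_mul_idem a He), (rng_mul_idem b Hf).
    apply way_below_mul_idem; auto using idem_mul_inv, way_below_rng.
Qed.

Lemma way_below_idem_mulr a b e f : idem e -> idem f ->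
  a ≪ b -> e ≪ f -> a * e ≪ b * f.
Proof.
  intros He Hf Hab Hef.
  pose proof (way_below_inv (way_below_idem_mull He Hf (way_below_inv Hab) Hef)) as Hinv.
  now rewrite !inv_mul, !invK, (idem_inv He), (idem_inv Hf) in Hinv.
Qed.

Lemma way_below_mul s t s' t' : s ≪ t -> s' ≪ t' -> s * s' ≪ t * t'.
Proof.
  intros Hst Hst'.
  apply way_below_of_rng; [assumption | |].
  - apply le_trans with (t * s'); [apply le_mulr | apply le_mull]; now apply way_below_le.
  - rewrite (rng_mul s s'), (rng_mul t t').
    apply way_below_rng; [assumption |].
    apply way_below_idem_mulr; auto using idem_mul_inv, way_below_rng.
Qed.

End Multiplicativity.

End InverseSemigroup.

Theorem proposition4p6 (S : Type) (mul : S -> S -> S) :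
  is_inverse_semigroup mul ->
  mirror_semigroup mul ->
  separately_scott_continuous mul ->
  (multiplicative_on mul (allS (S:=S)) (way_below mul) <->
   multiplicative_on mul (idempotent mul) (way_below_idem mul)).
Proof.
  intros HS Hmir Hsc. split.
  - intros Hmul e f e' f' _ Hf _ Hf' Hef Hef'.
    apply (way_below_idem_of_way_below HS Hmir).
    apply Hmul; try exact I; now apply (way_below_of_way_below_idem HS Hsc).
  - intros Hmul s t s' t' _ _ _ _. apply (way_below_mul HS Hsc Hmir Hmul).
Qed.
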